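(* Let $(A;R)\in\mathcal C$, let $t:R\to A$ be a transversal with image $A\setminus Y$, and let $F\subseteq A$ with $F\le A$. Then $$Z=\{f\in F\setminus Y: t^{-1}(f)\not\subseteq F\}\cup(F\cap Y)$$ is a basis for $F$ in the pregeometry $PG(A;R)$.
   Context: A set system is a pair $(A;R)$ where $A$ is a set and $R$ is a set of finite non-empty subsets of $A$. For finite $X\subseteq A$ write $R[X]=\{r\in R: r\subseteq X\}$ and define the predimension $\delta(X)=|X|-|R[X]|$. $\mathcal C$ is the class of finite set systems with $\delta(X)\ge 0$ for all $X\subseteq A$. For $X\subseteq A$, $X\le A$ means $\delta(X)\le\delta(X')$ for all $X'$ with $X\subseteq X'\subseteq A$. Define $d(X)=\min\{\delta(Y): X\subseteq Y\subseteq A\}$ and $\mathrm{cl}(X)=\{y\in A: d(X\cup\{y\})=d(X)\}$; $(A,\mathrm{cl})$ is a pregeometry with rank function $d$, denoted $PG(A;R)$. A transversal of $(A;R)$ is an injective function $t:R\to A$ with $t(r)\in r$ for all $r\in R$. *)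

(* A finite set system (A;R) is modelled with A = the whole
   finite type T and R : {set {set T}}. *)
From HB Require Import structures.
From mathcomp Require Import all_boot all_order all_algebra.
Set Implicit Arguments. Unset Strict Implicit. Unset Printing Implicit Defensive.
Import Order.TTheory GRing.Theory Num.Theory.

Section SetSystems.
Variable T : finType.
Variable R : {set {set T}}.

Definition ss_set_system : Prop := forall r, r \in R -> r != set0.

Definition ss_RX (X : {set T}) : {set {set T}} := [set r in R | r \subset X].

Definition ss_delta (X : {set T}) : int := (#|X|%:Z - #|ss_RX X|%:Z)%R.

Definition ss_inC : Prop := ss_set_system /\ forall X : {set T}, (0 <= ss_delta X)%R.

Definition ss_ssuff (X : {set T}) : Prop :=
  forall X' : {set T}, X \subset X' -> (ss_delta X <= ss_delta X')%R.

Definition ss_dim (X : {set T}) : int :=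
  \big[Order.min/ss_delta setT]_(Y : {set T} | X \subset Y) ss_delta Y.

Definition ss_cl (X : {set T}) : {set T} := [set y | ss_dim (y |: X) == ss_dim X].

Definition ss_independent (Z : {set T}) : Prop :=
  forall z, z \in Z -> z \notin ss_cl (Z :\ z).

Definition ss_basis_of (Z F : {set T}) : Prop :=
  [/\ Z \subset F, ss_independent Z & F \subset ss_cl Z].

Definition ss_transversal (t : {set T} -> T) : Prop :=
  {in R &, injective t} /\ forall r, r \in R -> t r \in r.

End SetSystems.

(* Counting with the transversal gives two bounds:
   - if Z <= W <= F, then Z and t(R[W]) are disjoint subsets of W and t is
     injective, so |Z| + |R[W]| <= |W|, i.e. |Z| <= delta(W);
   - every point of F outside Z is t(r) for some r in R[F], so
     |F| <= |Z| + |R[F]|, i.e. delta(F) <= |Z|.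
   Since F <= A and delta is submodular, d(Z) is the minimum of delta over
   Z <= W <= F, so the first bound yields |Z| <= d(Z).  A set of full rank
   |Z| = d(Z) is independent, and for y in F we get
   d(Z) <= d(y u Z) <= delta(F) <= |Z| <= d(Z), so F <= cl(Z). *)
From mathcomp Require Import all_boot all_order all_algebra.
From mathcomp Require Import zify.
Set Implicit Arguments. Unset Strict Implicit. Unset Printing Implicit Defensive.
Import Order.TTheory GRing.Theory Num.Theory.

Section Predimension.
Variables (T : finType) (R : {set {set T}}).

Lemma dim_le_delta (X W : {set T}) : X \subset W -> (ss_dim R X <= ss_delta R W)%R.
Proof. by move=> XW; rewrite /ss_dim (bigD1 W) //= ge_min lexx. Qed.

Lemma dim_ge (X : {set T}) (c : int) :
  (forall W : {set T}, X \subset W -> (c <= ss_delta R W)%R) ->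
  (c <= ss_dim R X)%R.
Proof.
move=> lb; rewrite /ss_dim; apply: (big_ind (fun v => c <= v)%R) => //.
- exact: lb (subsetT X).
- by move=> a b ca cb; rewrite le_min ca cb.
Qed.

Lemma delta_le_card (W : {set T}) : (ss_delta R W <= #|W|%:Z)%R.
Proof. rewrite /ss_delta; lia. Qed.

Lemma dim_subset (X X' : {set T}) : X \subset X' -> (ss_dim R X <= ss_dim R X')%R.
Proof.
move=> XX'; apply: dim_ge => W X'W; apply: dim_le_delta.
exact: subset_trans X'W.
Qed.

Lemma RX_setI (W F : {set T}) : ss_RX R (W :&: F) = ss_RX R W :&: ss_RX R F.
Proof. by apply/setP=> r; rewrite !inE subsetI andbACA andbb. Qed.

Lemma RX_setU (W F : {set T}) : ss_RX R W :|: ss_RX R F \subset ss_RX R (W :|: F).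
Proof.
apply/subsetP=> r; rewrite !inE => /orP[] /andP[-> rS] /=.
- exact: subset_trans rS (subsetUl _ _).
- exact: subset_trans rS (subsetUr _ _).
Qed.

Lemma delta_submod (W F : {set T}) :
  (ss_delta R (W :|: F) + ss_delta R (W :&: F) <= ss_delta R W + ss_delta R F)%R.
Proof.
have cardA := cardsUI W F.
have cardR := cardsUI (ss_RX R W) (ss_RX R F).
have RU := subset_leq_card (RX_setU W F).
rewrite -RX_setI in cardR; rewrite /ss_delta; lia.
Qed.

(* Inside a self-sufficient F, d(X) is the minimum of delta over X <= W <= F:
   for any W containing X, delta(W) >= delta(W u F) + delta(W n F) - delta(F)
   >= delta(W n F). *)
Lemma dim_ge_ssuff (F X : {set T}) (c : int) :
  ss_ssuff R F -> X \subset F ->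
  (forall W : {set T}, X \subset W -> W \subset F -> (c <= ss_delta R W)%R) ->
  (c <= ss_dim R X)%R.
Proof.
move=> Fss XF lb; apply: dim_ge => W XW.
have cWF : (c <= ss_delta R (W :&: F))%R by apply: lb (subsetIr _ _); rewrite subsetI XW.
have := delta_submod W F; have := Fss (W :|: F) (subsetUr _ _); lia.
Qed.

(* A set of full rank is independent: removing z drops the rank below |Z|. *)
Lemma independent_full_dim (Z : {set T}) :
  (#|Z|%:Z <= ss_dim R Z)%R -> ss_independent R Z.
Proof.
move=> fullZ z zZ; rewrite inE (setD1K zZ); apply/negP => /eqP dimZ.
have := le_trans (dim_le_delta (subxx (Z :\ z))) (delta_le_card (Z :\ z)).
have := cardsD1 z Z; rewrite zZ; lia.
Qed.

Lemma subset_cl (X W : {set T}) :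
  X \subset W -> (ss_delta R W <= ss_dim R X)%R -> W \subset ss_cl R X.
Proof.
move=> XW deltaW; apply/subsetP => y yW; rewrite inE eq_le.
rewrite (dim_subset (subsetUr [set y] X)) andbT.
apply: le_trans deltaW; apply: dim_le_delta.
by rewrite subUset sub1set yW.
Qed.

End Predimension.

Section TransversalCounting.
Variables (T : finType) (R : {set {set T}}) (t : {set T} -> T).

(* If X <= W misses t(R[W]), then X and t(R[W]) are disjoint subsets of W of
   sizes |X| and |R[W]| (t is injective), hence |X| <= delta(W). *)
Lemma card_le_delta (X W : {set T}) :
  ss_transversal R t -> X \subset W -> [disjoint X & t @: ss_RX R W] ->
  (#|X|%:Z <= ss_delta R W)%R.
Proof.
move=> [tinj tin] XW disjX.
have imW : t @: ss_RX R W \subset W.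
  apply/subsetP => x /imsetP[r]; rewrite inE => /andP[rR rW] ->.
  exact: subsetP rW _ (tin r rR).
have cardIm : #|t @: ss_RX R W| = #|ss_RX R W|.
  apply: card_in_imset => a b; rewrite !inE => /andP[aR _] /andP[bR _].
  exact: tinj.
have XimW : X :|: t @: ss_RX R W \subset W by rewrite subUset XW imW.
move: disjX (subset_leq_card XimW); rewrite -setI_eq0 cardsU => /eqP ->.
rewrite cards0 subn0 cardIm /ss_delta; lia.
Qed.

Lemma delta_le_card_cover (X W : {set T}) :
  W \subset X :|: t @: ss_RX R W -> (ss_delta R W <= #|X|%:Z)%R.
Proof.
move=> cover.
have cardW : #|W| <= #|X| + #|ss_RX R W|.
  apply: leq_trans (subset_leq_card cover) _.
  by rewrite (leq_trans (leq_card_setU _ _)) // leq_add2l leq_imset_card.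
rewrite /ss_delta; lia.
Qed.

End TransversalCounting.

Section TransversalBasis.
Variables (T : finType) (R : {set {set T}}) (t : {set T} -> T) (Y F : {set T}).
Hypothesis t_transversal : ss_transversal R t.
Hypothesis t_image : [set t r | r in R] = ~: Y.

Definition transversal_basis : {set T} :=
  [set f in F :\: Y | [exists r in R, (t r == f) && ~~ (r \subset F)]] :|: (F :&: Y).

Local Notation Z := transversal_basis.

Lemma transversal_basis_sub : Z \subset F.
Proof. by apply/subsetP => x; rewrite !inE => /orP[/andP[/andP[_ ->]]|/andP[->]]. Qed.

Lemma t_notin_Y (r : {set T}) : r \in R -> t r \notin Y.
Proof. by move=> rR; rewrite -in_setC -t_image imset_f. Qed.

(* A point t(r) with r <= F is not in Z: it is outside Y, and its only
   preimage r is contained in F. *)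
Lemma transversal_basis_disjoint (W : {set T}) :
  W \subset F -> [disjoint Z & t @: ss_RX R W].
Proof.
move=> WF; rewrite -setI_eq0; apply/eqP/setP => x; rewrite !inE.
apply/negP => /andP[xZ /imsetP[r]]; rewrite inE => /andP[rR rW] xE.
move: xZ; rewrite xE (negbTE (t_notin_Y rR)) andbF orbF andbC.
case/andP=> /existsP[r' /and3P[r'R /eqP tE r'F]] _.
have r'E : r' = r by case: t_transversal => tinj _; apply: tinj.
by move: r'F; rewrite r'E (subset_trans rW WF).
Qed.

Lemma transversal_basis_cover : F \subset Z :|: t @: ss_RX R F.
Proof.
apply/subsetP => x xF; rewrite inE; case xZ: (x \in Z) => //=.
have xY : x \notin Y by apply: contraFN xZ => xY; rewrite !inE xF xY orbT.
have /imsetP[r rR xE] : x \in t @: R by rewrite t_image inE.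
apply/imsetP; exists r => //; rewrite inE rR /=.
apply: contraFT xZ => rF; rewrite !inE xF (negbTE xY) /= orbF.
by apply/existsP; exists r; rewrite rR xE eqxx rF.
Qed.

End TransversalBasis.

Theorem corollary2p3 (T : finType) (R : {set {set T}})
  (t : {set T} -> T) (Y F : {set T}) :
  ss_inC R ->
  ss_transversal R t ->
  [set t r | r in R] = ~: Y ->
  ss_ssuff R F ->
  ss_basis_of R
    ([set f in F :\: Y | [exists r in R, (t r == f) && ~~ (r \subset F)]]
       :|: (F :&: Y))
    F.
Proof.
move=> _ ttr timg Fss; rewrite -/(transversal_basis R t Y F).
set Z := transversal_basis R t Y F.
have ZF : Z \subset F := transversal_basis_sub R t Y F.
have fullZ : (#|Z|%:Z <= ss_dim R Z)%R.
  apply: dim_ge_ssuff Fss ZF _ => W ZW WF.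
  exact: card_le_delta ttr ZW (transversal_basis_disjoint ttr timg WF).
have deltaF : (ss_delta R F <= #|Z|%:Z)%R.
  exact: delta_le_card_cover (transversal_basis_cover F timg).
split=> //; first exact: independent_full_dim.
exact: subset_cl ZF (le_trans deltaF fullZ).
Qed.
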